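(* Let $G$ be a finitely generated group such that $[e]_g$ is a subgroup of $G$ for every $g\in G$. If $G$ satisfies the descending chain condition for normal subgroups, then $G$ is nilpotent.
   Context: $[x,y]=x^{-1}y^{-1}xy$; $[e]_g=\{[x,g]\mid x\in G\}$. The descending chain condition for normal subgroups (Min-n) means: for every chain $H_1\ge H_2\ge H_3\ge\dots$ of normal subgroups of $G$ there exists $m$ with $H_m=H_{m+1}=\cdots$. *)

From Stdlib Require Import List.

Record Group := {
  carrier :> Type;
  mul : carrier -> carrier -> carrier;
  inv : carrier -> carrier;
  one : carrier;
  mul_assoc : forall x y z, mul x (mul y z) = mul (mul x y) z;
  mul_one_l : forall x, mul one x = x;
  mul_inv_l : forall x, mul (inv x) x = one
}.

Arguments mul {g} _ _.
Arguments inv {g} _.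
Arguments one {g}.

Definition comm {G : Group} (x y : G) : G :=
  mul (mul (mul (inv x) (inv y)) x) y.

Definition subset (G : Group) := G -> Prop.

Definition is_subgroup {G : Group} (H : subset G) : Prop :=
  H one /\ (forall x y, H x -> H y -> H (mul x y)) /\ (forall x, H x -> H (inv x)).

Definition is_normal {G : Group} (H : subset G) : Prop :=
  is_subgroup H /\ (forall x g, H x -> H (mul (mul (inv g) x) g)).

Definition gen {G : Group} (S : subset G) : subset G :=
  fun x => forall H : subset G, is_subgroup H -> (forall y, S y -> H y) -> H x.

Definition finitely_generated (G : Group) : Prop :=
  exists l : list G, forall x : G, gen (fun y => In y l) x.

(* [e]_g = { [x,g] | x in G } *)
Definition comm_set {G : Group} (g : G) : subset G :=
  fun z => exists x : G, z = comm x g.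

Definition min_n (G : Group) : Prop :=
  forall H : nat -> subset G,
    (forall n, is_normal (H n)) ->
    (forall n x, H (S n) x -> H n x) ->
    exists m, forall k, m <= k -> forall x, H k x <-> H m x.

Fixpoint lcs (G : Group) (n : nat) : subset G :=
  match n with
  | O => fun _ => True
  | S n' => gen (fun z => exists x g, lcs G n' x /\ z = comm x g)
  end.

Definition nilpotent (G : Group) : Prop :=
  exists n, forall x : G, lcs G n x -> x = one.

(* Let γ_m = γ_{m+1} be the point where Min-n stops the lower central series.
   Since G is finitely generated, γ_m is the normal closure of finitely many
   elements s_1, ..., s_k.  We show γ_m ⊆ M for every normal M with
   γ_m ⊆ ncl(s_1, ..., s_k, M), by induction on k.  The step enlarges M to
   M' = M [e]_{s_1}, which is a normal subgroup because [e]_{s_1} is; modulo M'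
   the element s_1 is central, so induction applied to the preimage Z of the
   centre of G/M' gives γ_m ⊆ Z, i.e. γ_m = [γ_m, G] ⊆ M'.  Writing
   s_1 = m [y, s_1] with m ∈ M forces s_1 ∈ M, hence M' = M and γ_m ⊆ M.
   Taking M = 1 gives γ_m = 1. *)
From Stdlib Require Import List.

Section GroupLaws.
Context {G : Group}.
Implicit Types x y z : G.

Lemma mulgA x y z : mul x (mul y z) = mul (mul x y) z.
Proof. apply mul_assoc. Qed.

Lemma mul1g x : mul one x = x.
Proof. apply mul_one_l. Qed.

Lemma mulVg x : mul (inv x) x = one.
Proof. apply mul_inv_l. Qed.

Lemma mulgV x : mul x (inv x) = one.
Proof.
  rewrite <- (mul1g (mul x (inv x))), <- (mulVg (inv x)) at 1.
  rewrite <- mulgA, (mulgA (inv x) x), mulVg, mul1g, mulVg.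
  reflexivity.
Qed.

Lemma mulg1 x : mul x one = x.
Proof. rewrite <- (mulVg x), mulgA, mulgV, mul1g. reflexivity. Qed.

Lemma invgK x : inv (inv x) = x.
Proof.
  rewrite <- (mulg1 (inv (inv x))), <- (mulVg x), mulgA, mulVg, mul1g.
  reflexivity.
Qed.

Lemma invMg x y : inv (mul x y) = mul (inv y) (inv x).
Proof.
  assert (Hinv : mul (mul x y) (mul (inv y) (inv x)) = one).
  { rewrite mulgA, <- (mulgA x y), mulgV, mulg1, mulgV. reflexivity. }
  rewrite <- (mulg1 (inv (mul x y))), <- Hinv, mulgA, mulVg, mul1g.
  reflexivity.
Qed.

Lemma invg1 : inv (@one G) = one.
Proof. rewrite <- (mulg1 (inv one)). apply mulVg. Qed.

Lemma mulgK x y : mul (mul x y) (inv y) = x.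
Proof. rewrite <- mulgA, mulgV, mulg1. reflexivity. Qed.

Lemma mulgKV x y : mul (mul x (inv y)) y = x.
Proof. rewrite <- mulgA, mulVg, mulg1. reflexivity. Qed.

End GroupLaws.

Definition conjg {G : Group} (x h : G) : G := mul (mul (inv h) x) h.

Ltac group_simpl :=
  repeat progress (rewrite ?invMg, ?invgK, ?invg1);
  rewrite ?mulgA;
  repeat progress (rewrite ?mulgK, ?mulgKV, ?mulVg, ?mulgV, ?mul1g, ?mulg1).

Ltac group_eq := unfold comm, conjg; group_simpl; reflexivity.

Section Subgroups.
Context {G : Group}.
Implicit Types (H K M N S : subset G) (x y g h : G).

Lemma group1 H : is_subgroup H -> H one.
Proof. intros [H1 _]; exact H1. Qed.

Lemma groupM H : is_subgroup H -> forall x y, H x -> H y -> H (mul x y).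
Proof. intros [_ [HM _]]; exact HM. Qed.

Lemma groupV H : is_subgroup H -> forall x, H x -> H (inv x).
Proof. intros [_ [_ HV]]; exact HV. Qed.

Lemma normal_subgroup H : is_normal H -> is_subgroup H.
Proof. intros [HH _]; exact HH. Qed.

Lemma normalJ H : is_normal H -> forall x h, H x -> H (conjg x h).
Proof. intros [_ HJ] x h Hx; exact (HJ x h Hx). Qed.

Lemma normal_commg_l H : is_normal H -> forall x g, H x -> H (comm x g).
Proof.
  intros nH x g Hx. replace (comm x g) with (mul (inv x) (conjg x g)) by group_eq.
  pose proof (normal_subgroup _ nH) as sgH.
  apply (groupM _ sgH); [apply (groupV _ sgH)|apply normalJ]; auto.
Qed.

Lemma normal_trivial : is_normal (fun x : G => x = one).
Proof.
  split; [split; [|split]|].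
  - reflexivity.
  - intros a b -> ->. apply mul1g.
  - intros a ->. apply invg1.
  - intros a h ->. group_eq.
Qed.

Lemma gen_subgroup S : is_subgroup (gen S).
Proof.
  split; [|split].
  - intros H sgH _. apply (group1 _ sgH).
  - intros x y Hx Hy H sgH sSH. apply (groupM _ sgH); [apply Hx|apply Hy]; auto.
  - intros x Hx H sgH sSH. apply (groupV _ sgH); apply Hx; auto.
Qed.

Lemma mem_gen S x : S x -> gen S x.
Proof. intros Sx H _ sSH. auto. Qed.

Lemma gen_normal S : (forall x h, S x -> S (conjg x h)) -> is_normal (gen S).
Proof.
  intros SJ. split; [apply gen_subgroup|].
  intros x h Hx.
  assert (sg_stable : is_subgroup (fun z => forall h, gen S (conjg z h))).
  { pose proof (gen_subgroup S) as sgS. split; [|split].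
    - intros h'. replace (conjg one h') with (@one G) by group_eq. apply (group1 _ sgS).
    - intros a b Ha Hb h'.
      replace (conjg (mul a b) h') with (mul (conjg a h') (conjg b h')) by group_eq.
      apply (groupM _ sgS); auto.
    - intros a Ha h'. replace (conjg (inv a) h') with (inv (conjg a h')) by group_eq.
      apply (groupV _ sgS); auto. }
  apply (Hx _ sg_stable). intros y Sy h'. apply mem_gen. auto.
Qed.

Lemma normal_centre_mod K : is_normal K -> is_normal (fun x => forall g, K (comm x g)).
Proof.
  intros nK. pose proof (normal_subgroup _ nK) as sgK. split; [split; [|split]|].
  - intros g. replace (comm one g) with (@one G) by group_eq. apply (group1 _ sgK).
  - intros x y Hx Hy g.
    replace (comm (mul x y) g) with (mul (conjg (comm x g) y) (comm y g)) by group_eq.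
    apply (groupM _ sgK); [apply normalJ|]; auto.
  - intros x Hx g. replace (comm (inv x) g) with (inv (conjg (comm x g) (inv x))) by group_eq.
    apply (groupV _ sgK), normalJ; auto.
  - intros x h Hx g. change (K (comm (conjg x h) g)).
    replace (comm (conjg x h) g) with (conjg (comm x (mul (mul h g) (inv h))) h) by group_eq.
    apply normalJ; auto.
Qed.

Lemma subgroup_comm_mod K (c : G) : is_normal K -> is_subgroup (fun g => K (comm c g)).
Proof.
  intros nK. pose proof (normal_subgroup _ nK) as sgK. split; [|split].
  - replace (comm c one) with (@one G) by group_eq. apply (group1 _ sgK).
  - intros x y Hx Hy.
    replace (comm c (mul x y)) with (mul (comm c y) (conjg (comm c x) y)) by group_eq.
    apply (groupM _ sgK); [|apply normalJ]; auto.
  - intros x Hx. replace (comm c (inv x)) with (inv (conjg (comm c x) (inv x))) by group_eq.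
    apply (groupV _ sgK), normalJ; auto.
Qed.

Lemma normal_comm_set (s : G) : is_subgroup (comm_set s) -> is_normal (comm_set s).
Proof.
  intros sgC. split; auto. intros z h [y ->]. change (comm_set s (conjg (comm y s) h)).
  replace (conjg (comm y s) h) with (mul (comm (mul y h) s) (inv (comm h s))) by group_eq.
  apply (groupM _ sgC); [|apply (groupV _ sgC)]; [exists (mul y h)|exists h]; reflexivity.
Qed.

Definition mulset M N : subset G := fun z => exists m n, M m /\ N n /\ z = mul m n.

Lemma normal_mulset M N : is_normal M -> is_normal N -> is_normal (mulset M N).
Proof.
  intros nM nN. pose proof (normal_subgroup _ nM) as sgM. pose proof (normal_subgroup _ nN) as sgN.
  split; [split; [|split]|].
  - exists one, one. split; [apply (group1 _ sgM)|split; [apply (group1 _ sgN)|group_eq]].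
  - intros x y [m1 [n1 [Hm1 [Hn1 ->]]]] [m2 [n2 [Hm2 [Hn2 ->]]]].
    exists (mul m1 (conjg m2 (inv n1))), (mul n1 n2). split; [|split].
    + apply (groupM _ sgM); [|apply normalJ]; auto.
    + apply (groupM _ sgN); auto.
    + group_eq.
  - intros x [m [n [Hm [Hn ->]]]]. exists (conjg (inv m) n), (inv n). split; [|split].
    + apply normalJ, (groupV _ sgM); auto.
    + apply (groupV _ sgN); auto.
    + group_eq.
  - intros x h [m [n [Hm [Hn ->]]]]. exists (conjg m h), (conjg n h).
    split; [apply normalJ|split; [apply normalJ|group_eq]]; auto.
Qed.

(* [N, G]; note that [lcs G (S n)] is convertible to [commG (lcs G n)]. *)
Definition commG N : subset G := gen (fun z => exists x g, N x /\ z = comm x g).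

Definition sub_ncl N S : Prop :=
  forall K, is_normal K -> (forall s, S s -> K s) -> forall x, N x -> K x.

End Subgroups.

Section LowerCentralSeries.
Variable G : Group.

Lemma lcs_normal n : is_normal (lcs G n).
Proof.
  induction n as [|n IH].
  - split; [split; [|split]|]; simpl; auto.
  - apply gen_normal. intros t h [x [g [Hx ->]]].
    exists (conjg x h), (conjg g h). split; [apply normalJ; auto|group_eq].
Qed.

Lemma lcs_decr n x : lcs G (S n) x -> lcs G n x.
Proof.
  intros Hx. apply Hx; [apply normal_subgroup, lcs_normal|].
  intros y [x' [g [Hx' ->]]]. apply normal_commg_l; auto. apply lcs_normal.
Qed.

Lemma sub_ncl_lcs (l : list G) : (forall x : G, gen (fun y => In y l) x) ->
  forall n, exists T : list G, (forall s, In s T -> lcs G n s) /\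
    sub_ncl (lcs G n) (fun s => In s T).
Proof.
  intros genl n. induction n as [|n [T [Tlcs Tncl]]].
  - exists l. split; [simpl; auto|].
    intros K nK lK x _. apply (genl x K (normal_subgroup _ nK) lK).
  - exists (flat_map (fun c => map (comm c) l) T). split.
    + intros s Hs. apply in_flat_map in Hs. destruct Hs as [c [Hc Hs]].
      apply in_map_iff in Hs. destruct Hs as [g [<- _]].
      apply mem_gen. exists c, g. split; [apply Tlcs, Hc | reflexivity].
    + intros K nK TK x Hx. apply Hx; [apply (normal_subgroup _ nK)|].
      intros y [x' [g [Hx' ->]]].
      (* every c in T is central modulo K: [c, _] lands in K on the generators l *)
      assert (Tcentral : forall c, In c T -> forall g, K (comm c g)).
      { intros c Hc g'. apply (genl g' _ (subgroup_comm_mod K c nK)).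
        intros g0 Hg0. apply TK, in_flat_map. exists c. split; [auto|].
        apply in_map_iff. exists g0. auto. }
      exact (Tncl _ (normal_centre_mod K nK) Tcentral x' Hx' g).
Qed.

End LowerCentralSeries.

Lemma sub_normal_of_commG_stable (G : Group)
  (comm_subgroup : forall g : G, is_subgroup (comm_set g))
  (N : subset G) (N_commG : forall x, N x -> commG N x) :
  forall T : list G, (forall s, In s T -> N s) ->
  forall M, is_normal M -> sub_ncl N (fun s => In s T \/ M s) -> forall x, N x -> M x.
Proof.
  intros T. induction T as [|s T IH]; intros TN M nM Nncl.
  - apply Nncl; auto. intros s [[] | Ms]; auto.
  - pose proof (normal_subgroup _ nM) as sgM.
    set (M' := mulset M (comm_set s)).
    assert (nM' : is_normal M') by (apply normal_mulset, normal_comm_set; auto).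
    assert (N_Z : forall x, N x -> forall y, M' (comm x y)).
    { apply (IH (fun t Ht => TN t (or_intror Ht)) (fun x => forall y, M' (comm x y)));
        [apply normal_centre_mod; auto|].
      intros K nK ZK. apply Nncl; auto. intros t [[<- | Ht] | Mt]; apply ZK; auto.
      - right. intros y. exists one, (inv (comm y s)).
        split; [apply (group1 _ sgM)|split; [|group_eq]].
        apply (groupV _ (comm_subgroup s)). exists y; reflexivity.
      - right. intros y. exists (comm t y), one.
        split; [apply normal_commg_l; auto|split; [apply (group1 _ (comm_subgroup s))|group_eq]]. }
    assert (N_M' : forall x, N x -> M' x).
    { intros x Hx. apply (N_commG x Hx); [apply normal_subgroup; auto|].
      intros y [x' [g [Hx' ->]]]. apply N_Z; auto. }
    assert (Ms : M s).
    { destruct (N_M' s (TN s (or_introl eq_refl))) as [m [c [Hm [[y ->] Es]]]].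
      (* s = m [y, s] rearranges to m = s^y *)
      replace s with (conjg m (inv y)); [apply normalJ; auto|].
      assert (Em : m = mul s (inv (comm y s))) by (rewrite Es at 1; symmetry; apply mulgK).
      rewrite Em. group_eq. }
    intros x Hx. destruct (N_M' x Hx) as [m [c [Hm [[y ->] ->]]]].
    apply (groupM _ sgM); auto.
    replace (comm y s) with (mul (conjg (inv s) y) s) by group_eq.
    apply (groupM _ sgM); auto. apply normalJ, (groupV _ sgM); auto.
Qed.

Theorem corollary3 (G : Group) :
  finitely_generated G ->
  (forall g : G, is_subgroup (comm_set g)) ->
  min_n G ->
  nilpotent G.
Proof.
  intros [l genl] comm_subgroup minG.
  destruct (minG (lcs G) (lcs_normal G) (lcs_decr G)) as [m stable].
  assert (lcs_commG : forall x, lcs G m x -> commG (lcs G m) x).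
  { intros x Hx. apply (stable (S m) (le_S _ _ (le_n m))). auto. }
  destruct (sub_ncl_lcs G l genl m) as [T [Tlcs Tncl]].
  exists m.
  apply (sub_normal_of_commG_stable G comm_subgroup _ lcs_commG T Tlcs _ normal_trivial).
  intros K nK TK. apply Tncl; auto.
Qed.
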